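(* Let $M$ and $M'$ be models over the same signature. If $K$ and $K'$ are both least upper bounds of $\{M,M'\}$ with respect to subsumption $\sqsubseteq$, then $K$ and $K'$ are isomorphic.
   Context: Signature: finite set of types $\mathsf{TYPE}$, finite set of attributes $\mathsf{ATTR}$, relation symbols $\mathsf{REL}=\bigcup_{m>1}\mathsf{REL}_m$, a set $\mathsf{NNAME}$ of base-labels, a set $\mathsf{NVAR}$ of node variables and a set $\mathsf{WVAR}$ of wrapping variables (pairwise disjoint); node labels are $\mathsf{NLABEL}=\mathsf{NNAME}\uplus\mathsf{NVAR}$. A Feature Structure with Wrappings (FSW) is $F=\langle V,\mathcal W,\mathcal I\rangle$ where $V$ is a nonempty set of nodes, $\mathcal W$ is a set of pairwise disjoint nonempty subsets of $V$ (the wrappings, with $\mathcal W\cap V=\emptyset$), and $\mathcal I$ maps each type $t$ to a subset $\mathcal I(t)\subseteq V$, each attribute $\mathsf P$ to a partial function $\mathcal I(\mathsf P)$ from $V$ to $V\cup\mathcal W$, each $m$-ary relation symbol $r$ to a subset of $(V\cup\mathcal W)^m$, and is a partial map from $\mathsf{NNAME}$ to $V$. The w-sets are the elements of $\hat{\mathcal W}=\mathcal W\cup\{V\setminus\bigcup\mathcal W\}$, a partition of $V$; $[v]$ denotes the w-set containing $v$. A model is $M=\langle F,g\rangle$ with $g=\langle g_N,g_W\rangle$, $g_N:\mathsf{NVAR}\rightharpoonup V$, $g_W:\mathsf{WVAR}\rightharpoonup\mathcal W$. Write $\mathcal I_g(b)=\mathcal I(b)$ for base-labels, $\mathcal I_g(x)=g_N(x)$,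 $\mathcal I_g(T)=g_W(T)$, and $\mathcal I_g(k,\varepsilon)=\mathcal I_g(k)$, $\mathcal I_g(k,p\mathsf Q)=\mathcal I(\mathsf Q)(\mathcal I_g(k,p))$ for attribute words $p\in\mathsf{ATTR}^*$ (partial). Models are required to satisfy: (reachability) for every $v\in V$ there are $k\in\mathsf{NLABEL}$ and $p\in\mathsf{ATTR}^*$ with $\mathcal I_g(k)\in[v]$ and $\mathcal I_g(k,p)=v$; (non-escapability) for every $W\in\mathcal W$, $v\in W$ and $p\in\mathsf{ATTR}^*$, if $\mathcal I(p)(v)$ is defined then it lies in $[v]$. A homomorphism $h:M\to M'$ is a pair $h_V:V\to V'\uplus\mathcal W'$, $h_{\mathcal W}:\mathcal W\to\mathcal W'$ such that, writing $h$ for both (and extending it to $V\cup\mathcal W$): $h(\mathcal I(t))\subseteq\mathcal I'(t)$ for all types; if $\mathcal I(\mathsf P)(v)$ is defined then $\mathcal I'(\mathsf P)(h(v))$ is defined and equals $h(\mathcal I(\mathsf P)(v))$; $h(\mathcal I(r))\subseteq\mathcal I'(r)$ for all relations; if $\mathcal I(b)$ is defined then $h(\mathcal I(b))=\mathcal I'(b)$; if $v\in W\in\mathcal W$ then $h_V(v)\in h_{\mathcal W}(W)$; if $g(x)$ is defined (for $x\in\mathsf{NVAR}\uplus\mathsf{WVAR}$) then $h(g(x))=g'(x)$. Subsumption: $M\sqsubseteq M'$ iff there is a homomorphism $M\to M'$. $K$ is a least upper bound of $\{M,M'\}$ if $M\sqsubseteq K$, $M'\sqsubseteq K$, and $K\sqsubseteq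 K''$ for every $K''$ with $M\sqsubseteq K''$ and $M'\sqsubseteq K''$. An isomorphism $\sigma:M\to M'$ is a homomorphism with $\sigma_V(V)\subseteq V'$, such that $\sigma_V:V\to V'$ and $\sigma_{\mathcal W}:\mathcal W\to\mathcal W'$ are bijections and $\sigma^{-1}=\langle\sigma_V^{-1},\sigma_{\mathcal W}^{-1}\rangle$ is a homomorphism $M'\to M$. *)

From Stdlib Require Import List.
Import ListNotations.
Set Implicit Arguments.

(* The sets TYPE, ATTR, REL, NNAME, NVAR, WVAR are types (hence
   pairwise disjoint as components of sums).  REL = U_{m>1} REL_m is encoded by
   an arity function with arity r > 1.  NLABEL = NNAME + NVAR. *)
Record Signature := {
  TYPE : Type;
  ATTR : Type;
  REL : Type;
  arity : REL -> nat;
  arity_gt1 : forall r, 1 < arity r;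
  NNAME : Type;
  NVAR : Type;
  WVAR : Type;
  TYPE_finite : exists l : list TYPE, forall t, In t l;
  ATTR_finite : exists l : list ATTR, forall a, In a l
}.

Definition NLABEL (S : Signature) : Type := (NNAME S + NVAR S)%type.

(* Raw data of a model M = <F, g> with F = <V, W, I>.
   Nodes V are the type [node]; wrappings W are indexed by the type [wrap], the
   wrapping w being the set of nodes {v | memw v w}.  Elements of V u W are
   [node + wrap] (V and W are disjoint). *)
Record Model (S : Signature) := {
  node : Type;
  wrap : Type;
  memw : node -> wrap -> Prop;
  itype : TYPE S -> node -> Prop;
  iattr : ATTR S -> node -> option (node + wrap);
  irel : REL S -> list (node + wrap) -> Prop;
  ibase : NNAME S -> option node;
  gN : NVAR S -> option node;
  gW : WVAR S -> option wrap
}.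

Arguments node {S}.
Arguments wrap {S}.
Arguments memw {S} m _ _.
Arguments itype {S} m _ _.
Arguments iattr {S} m _ _.
Arguments irel {S} m _ _.
Arguments ibase {S} m _.
Arguments gN {S} m _.
Arguments gW {S} m _.

Section ModelDefs.
Variable S : Signature.
Variable M : Model S.

Definition label_node (k : NLABEL S) : option (node M) :=
  match k with
  | inl b => ibase M b
  | inr x => gN M x
  end.

Definition attr_step (Q : ATTR S) (x : option (node M + wrap M))
  : option (node M + wrap M) :=
  match x with
  | Some (inl v) => iattr M Q v
  | _ => None
  end.

(* I(p)(x) for an attribute word p = Q1 Q2 ... Qn (Q1 applied first):
   I(eps)(x) = x, I(pQ)(x) = I(Q)(I(p)(x)) *)
Definition path_eval (x : option (node M + wrap M)) (p : list (ATTR S))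
  : option (node M + wrap M) :=
  fold_left (fun acc Q => attr_step Q acc) p x.

Definition same_wset (u v : node M) : Prop :=
  (exists w, memw M u w /\ memw M v w) \/
  ((forall w, ~ memw M u w) /\ (forall w, ~ memw M v w)).

Definition is_model : Prop :=
  inhabited (node M) /\
  (forall w : wrap M, exists v, memw M v w) /\
  (forall v w1 w2, memw M v w1 -> memw M v w2 -> w1 = w2) /\
  (* W is a set of subsets: distinct indices denote distinct subsets *)
  (forall w1 w2, (forall v, memw M v w1 <-> memw M v w2) -> w1 = w2) /\
  (forall r l, irel M r l -> length l = arity S r) /\
  (forall v : node M, exists (k : NLABEL S) (p : list (ATTR S)) (u : node M),
      label_node k = Some u /\ same_wset u v /\
      path_eval (Some (inl u)) p = Some (inl v)) /\
  (forall (w : wrap M) (v : node M) (p : list (ATTR S)) x,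
      memw M v w -> path_eval (Some (inl v)) p = Some x ->
      exists u, x = inl u /\ same_wset u v).

End ModelDefs.

Arguments label_node {S} M k.
Arguments path_eval {S} M x p.
Arguments same_wset {S} M u v.
Arguments is_model {S} M.

Definition hext {S : Signature} {M M' : Model S}
  (hV : node M -> node M' + wrap M') (hW : wrap M -> wrap M')
  (x : node M + wrap M) : node M' + wrap M' :=
  match x with
  | inl v => hV v
  | inr w => inr (hW w)
  end.

Definition is_hom {S : Signature} (M M' : Model S)
  (hV : node M -> node M' + wrap M') (hW : wrap M -> wrap M') : Prop :=
  (forall t v, itype M t v -> exists u, hV v = inl u /\ itype M' t u) /\
  (forall P v x, iattr M P v = Some x ->
     exists u, hV v = inl u /\ iattr M' P u = Some (hext hV hW x)) /\
  (forall r l, irel M r l -> irel M' r (map (hext hV hW) l)) /\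
  (forall b v, ibase M b = Some v ->
     exists u, hV v = inl u /\ ibase M' b = Some u) /\
  (forall v w, memw M v w -> exists u, hV v = inl u /\ memw M' u (hW w)) /\
  (forall x v, gN M x = Some v ->
     exists u, hV v = inl u /\ gN M' x = Some u) /\
  (forall T w, gW M T = Some w -> gW M' T = Some (hW w)).

Definition subsumes {S : Signature} (M M' : Model S) : Prop :=
  exists hV hW, is_hom M M' hV hW.

Definition is_lub {S : Signature} (M M' K : Model S) : Prop :=
  subsumes M K /\ subsumes M' K /\
  (forall K'' : Model S, is_model K'' ->
     subsumes M K'' -> subsumes M' K'' -> subsumes K K'').

(* Isomorphism: a homomorphism sigma with sigma_V(V) subset V', sigma_V : V -> V'
   and sigma_W bijections, whose inverse is a homomorphism. *)
Definition isomorphic {S : Signature} (M M' : Model S) : Prop :=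
  exists (f : node M -> node M') (fw : wrap M -> wrap M')
         (g : node M' -> node M) (gw : wrap M' -> wrap M),
    (forall v, g (f v) = v) /\ (forall u, f (g u) = u) /\
    (forall w, gw (fw w) = w) /\ (forall w, fw (gw w) = w) /\
    is_hom M M' (fun v => inl (f v)) fw /\
    is_hom M' M (fun u => inl (g u)) gw.

(* Two least upper bounds subsume each other, so there are homomorphisms
   h : K -> K' and g : K' -> K.  Homomorphisms preserve node labels and the
   evaluation of attribute paths, and by reachability every node of K is the
   value of a path from a labelled node; hence g (h v) = v for all nodes v, so
   h sends nodes to nodes and is a bijection with inverse g.  A wrapping w is
   nonempty, so picking v in w gives v in g (h w) as well, and disjointness of
   the wrappings forces g (h w) = w. *)
From Stdlib Require Import FunctionalExtensionality.

Lemma path_eval_None {S} (M : Model S) p : path_eval M None p = None.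
Proof. induction p; simpl; auto. Qed.

Lemma path_eval_hom {S} {M M' : Model S} {hV hW} :
  is_hom M M' hV hW ->
  forall p x y, path_eval M (Some x) p = Some y ->
  path_eval M' (Some (hext hV hW x)) p = Some (hext hV hW y).
Proof.
  intros [_ [Hattr _]].
  induction p as [|Q p IH]; intros x y E; simpl in *.
  - injection E as <-. reflexivity.
  - destruct x as [v|w]; simpl in E.
    + destruct (iattr M Q v) as [z|] eqn:Ez.
      * destruct (Hattr _ _ _ Ez) as [u [Hu Hu']].
        simpl. rewrite Hu. simpl. rewrite Hu'. apply IH; exact E.
      * fold (path_eval M None p) in E. rewrite path_eval_None in E. discriminate.
    + fold (path_eval M None p) in E. rewrite path_eval_None in E. discriminate.
Qed.

Lemma label_node_hom {S} {M M' : Model S} {hV hW} :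
  is_hom M M' hV hW ->
  forall k v, label_node M k = Some v ->
  exists u, hV v = inl u /\ label_node M' k = Some u.
Proof.
  intros [_ [_ [_ [Hbase [_ [HgN _]]]]]] [b|x] v E; simpl in *; eauto.
Qed.

Definition proj_inl {A B : Type} (x : A + B) : (forall b, x <> inr b) -> A :=
  match x as o return (forall b, o <> inr b) -> A with
  | inl a => fun _ => a
  | inr b => fun H => False_rect _ (H b eq_refl)
  end.

Lemma proj_inlK {A B : Type} (x : A + B) H : x = inl (proj_inl x H).
Proof. destruct x as [a|b]; [reflexivity | destruct (H b eq_refl)]. Qed.

Section BackAndForth.

Context {S : Signature} {K K' : Model S}.
Context {hV : node K -> node K' + wrap K'} {hW : wrap K -> wrap K'}.
Context {gV : node K' -> node K + wrap K} {gW : wrap K' -> wrap K}.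
Hypothesis HK : is_model K.
Hypothesis Hh : is_hom K K' hV hW.
Hypothesis Hg : is_hom K' K gV gW.

Lemma hom_comp_node_id v : hext gV gW (hV v) = inl v.
Proof.
  destruct HK as [_ [_ [_ [_ [_ [Hreach _]]]]]].
  destruct (Hreach v) as [k [p [u [Hk [_ Hp]]]]].
  destruct (label_node_hom Hh _ _ Hk) as [u1 [Hu1 Hk1]].
  destruct (label_node_hom Hg _ _ Hk1) as [u2 [Hu2 Hk2]].
  rewrite Hk in Hk2. injection Hk2 as <-.
  pose proof (path_eval_hom Hh _ _ _ Hp) as P1. simpl in P1. rewrite Hu1 in P1.
  pose proof (path_eval_hom Hg _ _ _ P1) as P2. simpl in P2. rewrite Hu2, Hp in P2.
  injection P2 as ->. reflexivity.
Qed.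

Lemma hom_node_valued v w : hV v <> inr w.
Proof. intro E. pose proof (hom_comp_node_id v) as R. rewrite E in R. discriminate. Qed.

Lemma hom_comp_wrap_id w : gW (hW w) = w.
Proof.
  destruct HK as [_ [Hne [Hdisj _]]].
  destruct Hh as [_ [_ [_ [_ [HmemK _]]]]].
  destruct Hg as [_ [_ [_ [_ [HmemK' _]]]]].
  destruct (Hne w) as [v Hv].
  destruct (HmemK _ _ Hv) as [u [Hu Hu']].
  destruct (HmemK' _ _ Hu') as [v' [Hv' Hv'']].
  pose proof (hom_comp_node_id v) as R. rewrite Hu in R. simpl in R.
  rewrite Hv' in R. injection R as ->.
  symmetry. exact (Hdisj _ _ _ Hv Hv'').
Qed.

End BackAndForth.

Lemma homs_back_and_forth_isomorphic {S} {K K' : Model S} {hV hW gV gW} :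
  is_model K -> is_model K' -> is_hom K K' hV hW -> is_hom K' K gV gW ->
  isomorphic K K'.
Proof.
  intros HK HK' Hh Hg.
  pose (f v := proj_inl (hV v) (hom_node_valued HK Hh Hg v)).
  pose (g u := proj_inl (gV u) (hom_node_valued HK' Hg Hh u)).
  assert (Ef : hV = fun v => inl (f v))
    by (apply functional_extensionality; intro; apply proj_inlK).
  assert (Eg : gV = fun u => inl (g u))
    by (apply functional_extensionality; intro; apply proj_inlK).
  exists f, hW, g, gW.
  refine (conj _ (conj _ (conj _ (conj _ (conj _ _))))).
  - intro v. pose proof (hom_comp_node_id HK Hh Hg v) as R.
    rewrite Ef, Eg in R. injection R as ->. reflexivity.
  - intro u. pose proof (hom_comp_node_id HK' Hg Hh u) as R.
    rewrite Ef, Eg in R. injection R as ->. reflexivity.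
  - intro w. exact (hom_comp_wrap_id HK Hh Hg w).
  - intro w. exact (hom_comp_wrap_id HK' Hg Hh w).
  - rewrite <- Ef. exact Hh.
  - rewrite <- Eg. exact Hg.
Qed.

Lemma is_lub_subsumes {S} {M M' K K' : Model S} :
  is_model K' -> is_lub M M' K -> is_lub M M' K' -> subsumes K K'.
Proof. intros HK' [_ [_ Hleast]] [HMK' [HM'K' _]]. exact (Hleast K' HK' HMK' HM'K'). Qed.

Theorem mainTheorem4 (S : Signature) (M M' K K' : Model S) :
  is_model M -> is_model M' -> is_model K -> is_model K' ->
  is_lub M M' K -> is_lub M M' K' ->
  isomorphic K K'.
Proof.
  intros _ _ HK HK' Hlub Hlub'.
  destruct (is_lub_subsumes HK' Hlub Hlub') as [hV [hW Hh]].
  destruct (is_lub_subsumes HK Hlub' Hlub) as [gV [gW Hg]].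
  exact (homs_back_and_forth_isomorphic HK HK' Hh Hg).
Qed.
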